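(* Let $(X,\tau)$ and $(Y,\sigma)$ be fuzzifying topological spaces and $f:X\to Y$ surjective. Then $$\max\big(0,\ L_PC(X,\tau)+I_P(f)+O_P(f)-2\big)\le L_PC(Y,\sigma),$$ i.e. $\vDash L_PC(X,\tau)\otimes I_P(f)\otimes O_P(f)\to L_PC(Y,\sigma)$.
   Context: Łukasiewicz: $[\varphi\otimes\psi]=\max(0,[\varphi]+[\psi]-1)$, $[\varphi\to\psi]=\min(1,1-[\varphi]+[\psi])$. A fuzzifying topology on $Z$ is $\tau:P(Z)\to[0,1]$ with $\tau(Z)=1$, $\tau(A\cap B)\ge\min$, $\tau(\bigcup A_\lambda)\ge\inf\tau(A_\lambda)$. $N_x(A)=\sup_{x\in B\subseteq A}\tau(B)$; $Cl(A)(x)=1-N_x(Z\setminus A)$; for $\mu:Z\to[0,1]$, $Int(\mu)(x)=\sup_{x\in B}\min(\tau(B),\inf_{y\in B}\mu(y))$; pre-open degrees $\tau_P(A)=\inf_{x\in A}Int(Cl(A))(x)$ (similarly $\sigma_P$ on $Y$); $N^P_x(A)=\sup_{x\in B\subseteq A}\tau_P(B)$. For $G\subseteq Z$: $(\tau_P/G)(B)=\sup\{\tau_P(V):V\cap G=B\}$. Compactness degree of $G$ w.r.t. $\eta:P(G)\to[0,1]$: with $K(\Re,G)=\inf_{x\in G}\sup_{B\ni x}\Re(B)$, $[\Re\subseteq\eta]=\inf_B\min(1,1-\Re(B)+\eta(B))$, $\wp\le\Re$ pointwise, $FF(\wp)=1-\inf\{\delta\in[0,1]:\{B:\wp(B)>\delta\}\text{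 finite}\}$, $\Gamma(G,\eta)=\inf_{\Re}\min\big(1,1-\max(0,K(\Re,G)+[\Re\subseteq\eta]-1)+\sup_{\wp\le\Re}\max(0,K(\wp,G)+FF(\wp)-1)\big)$. Locally strong compactness $L_PC(Z,\tau)=\inf_{x\in Z}\sup_{B\subseteq Z}\max(0,N^P_x(B)+\Gamma(B,\tau_P/B)-1)$. Pre-irresoluteness $I_P(f)=\inf_{B\subseteq Y}\min(1,1-\sigma_P(B)+\tau_P(f^{-1}(B)))$; pre-openness $O_P(f)=\inf_{U\subseteq X}\min(1,1-\tau_P(U)+\sigma_P(f(U)))$. *)

From HB Require Import structures.
From mathcomp Require Import all_boot all_order all_algebra.
From mathcomp Require Import boolp classical_sets functions cardinality reals.
Set Implicit Arguments. Unset Strict Implicit. Unset Printing Implicit Defensive.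
Import Order.TTheory GRing.Theory Num.Theory.
Local Open Scope classical_set_scope.
Local Open Scope ring_scope.

Section Defs.
Variable R : realType.

(* Infimum / supremum of a set of truth values in [0,1], with the standard
   conventions inf of the empty set = 1, sup of the empty set = 0. *)
Definition infI (E : set R) : R := inf (E `|` [set 1]).
Definition supI (E : set R) : R := sup (E `|` [set 0]).

Definition luk_and (a b : R) : R := Num.max 0 (a + b - 1).
Definition luk_imp (a b : R) : R := Num.min 1 (1 - a + b).

Variable Z : Type.

Definition fuzzifying_topology (tau : set Z -> R) : Prop :=
  [/\ (forall A, 0 <= tau A <= 1),
      tau setT = 1,
      (forall A B, Num.min (tau A) (tau B) <= tau (A `&` B)) &
      (forall F : set (set Z),
          infI (tau @` F) <= tau (\bigcup_(A in F) A))].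

Definition nbhd (tau : set Z -> R) (x : Z) (A : set Z) : R :=
  supI [set tau B | B in [set B | B x /\ B `<=` A]].

Definition fclosure (tau : set Z -> R) (A : set Z) (x : Z) : R :=
  1 - nbhd tau x (~` A).

Definition finterior (tau : set Z -> R) (mu : Z -> R) (x : Z) : R :=
  supI [set Num.min (tau B) (infI (mu @` B)) | B in [set B | B x]].

Definition preopen (tau : set Z -> R) (A : set Z) : R :=
  infI [set finterior tau (fclosure tau A) x | x in A].

Definition prenbhd (tau : set Z -> R) (x : Z) (A : set Z) : R :=
  supI [set preopen tau B | B in [set B | B x /\ B `<=` A]].

(* Fuzzy families of subsets of G are encoded as functions set Z -> R with
   values in [0,1] that vanish outside the subsets of G. *)
Definition ffamily (G : set Z) (Re : set Z -> R) : Prop :=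
  (forall B, 0 <= Re B <= 1) /\ (forall B, ~ (B `<=` G) -> Re B = 0).

Definition rel_preopen (tau : set Z -> R) (G : set Z) (B : set Z) : R :=
  supI [set preopen tau V | V in [set V | V `&` G = B]].

Definition Kdeg (Re : set Z -> R) (G : set Z) : R :=
  infI [set supI [set Re B | B in [set B | B x]] | x in G].

Definition incl_deg (G : set Z) (Re eta : set Z -> R) : R :=
  infI [set luk_imp (Re B) (eta B) | B in [set B | B `<=` G]].

Definition FFdeg (P : set Z -> R) : R :=
  1 - infI [set d | 0 <= d <= 1 /\ finite_set [set B | d < P B]].

Definition Gamma (G : set Z) (eta : set Z -> R) : R :=
  infI [set luk_imp (luk_and (Kdeg Re G) (incl_deg G Re eta))
              (supI [set luk_and (Kdeg P G) (FFdeg P)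
                     | P in [set P | ffamily G P /\ (forall B, P B <= Re B)]])
        | Re in ffamily G].

Definition LPC (tau : set Z -> R) : R :=
  infI [set supI [set luk_and (prenbhd tau x B) (Gamma B (rel_preopen tau B))
                 | B in [set: set Z]]
        | x in [set: Z]].

End Defs.

Section Maps.
Variables (R : realType) (X Y : Type).

Definition pre_irresolute (tau : set X -> R) (sigma : set Y -> R) (f : X -> Y) : R :=
  infI [set luk_imp (preopen sigma B) (preopen tau (f @^-1` B)) | B in [set: set Y]].

Definition pre_open_map (tau : set X -> R) (sigma : set Y -> R) (f : X -> Y) : R :=
  infI [set luk_imp (preopen tau U) (preopen sigma (f @` U)) | U in [set: set X]].
End Maps.

(* Pre-openness of f pushes pre-open sets forward and pre-irresoluteness pulls
   them back, each time losing at most 1 - O_P(f), resp. 1 - I_P(f).  Hence f maps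
   a pre-neighbourhood B of x to a pre-neighbourhood f(B) of f x, and a strongly
   compact B to a strongly compact f(B): a fuzzy cover Re of f(B) pulls back to the
   cover A |-> sup {Re(E) | f^-1(E) /\ B = A} of B, and a subfamily P of the latter
   pushes forward to E |-> min (Re(E), P(f^-1(E) /\ B)), a subfamily of Re that
   covers f(B) and is finite to at least the same degree.  Surjectivity makes every
   point of Y an image f x.
   A Lukasiewicz inequality a (x) c <= b is written a + c - 1 <= b throughout; the
   two agree whenever b >= 0. *)

From HB Require Import structures.
From mathcomp Require Import all_boot all_order all_algebra.
From mathcomp Require Import boolp classical_sets functions cardinality reals.
From mathcomp Require Import lra.
Set Implicit Arguments. Unset Strict Implicit. Unset Printing Implicit Defensive.
Import Order.TTheory GRing.Theory Num.Theory.
Local Open Scope classical_set_scope.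
Local Open Scope ring_scope.

Section TruthValues.
Variable R : realType.
Implicit Types (E : set R) (a b c d : R).

(* Junk values of [sup]/[inf] on unbounded sets are [0], so these hold unconditionally. *)
Lemma supI_ge0 E : 0 <= supI E.
Proof.
have [[_ ubE]|nsE] := pselect (has_sup (E `|` [set 0])); last by rewrite /supI sup_out.
by apply: ub_le_sup => //; right.
Qed.

Lemma infI_le1 E : infI E <= 1.
Proof.
have [[_ lbE]|niE] := pselect (has_inf (E `|` [set 1])); last by rewrite /infI inf_out.
by apply: ge_inf => //; right.
Qed.

Lemma supI_ub E e : (forall x, E x -> x <= 1) -> E e -> e <= supI E.
Proof. by move=> E1 Ee; apply: ub_le_sup; [exists 1 => x [/E1|->] | left]. Qed.

Lemma supI_lub E c : (forall x, E x -> x <= c) -> 0 <= c -> supI E <= c.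
Proof. by move=> Ec c0; apply: ge_sup; [exists 0; right | move=> x [/Ec|->]]. Qed.

Lemma supI_gt E c : 0 <= c -> c < supI E -> exists2 e, E e & c < e.
Proof.
move=> c0 /sup_gt[|e [Ee|->] ce]; first by exists 0; right.
  by exists e.
by move: ce; rewrite ltNge c0.
Qed.

Lemma infI_lb E e : (forall x, E x -> 0 <= x) -> E e -> infI E <= e.
Proof. by move=> E0 Ee; apply: ge_inf; [exists 0 => x [/E0|->] | left]. Qed.

Lemma infI_glb E c : (forall x, E x -> c <= x) -> c <= 1 -> c <= infI E.
Proof. by move=> Ec c1; apply: lb_le_inf; [exists 1; right | move=> x [/Ec|->]]. Qed.

Lemma supI_img_ub (I : Type) (F : I -> R) (P : set I) i :
  P i -> (forall i, F i <= 1) -> F i <= supI (F @` P).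
Proof. by move=> Pi F1; apply: supI_ub; [move=> _ [j _ <-] | exists i]. Qed.

Lemma infI_img_lb (I : Type) (F : I -> R) (P : set I) i :
  P i -> (forall i, 0 <= F i) -> infI (F @` P) <= F i.
Proof. by move=> Pi F0; apply: infI_lb; [move=> _ [j _ <-] | exists i]. Qed.

Section Images.
Variables (I J : Type) (F : I -> R) (G : J -> R) (P : set I) (Q : set J).

Lemma supI_img_transfer c : c <= 1 -> (forall j, G j <= 1) ->
    (forall i, P i -> exists2 j, Q j & F i + c - 1 <= G j) ->
  supI (F @` P) + c - 1 <= supI (G @` Q).
Proof.
move=> c1 G1 FG; suff : supI (F @` P) <= supI (G @` Q) + 1 - c by lra.
apply: supI_lub => [_ [i /FG[j Qj FGij] <-]|]; last by have := supI_ge0 (G @` Q); lra.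
by have := supI_img_ub Qj G1; lra.
Qed.

Lemma infI_img_transfer c : c <= 1 -> (forall i, 0 <= F i) ->
    (forall j, Q j -> exists2 i, P i & F i + c - 1 <= G j) ->
  infI (F @` P) + c - 1 <= infI (G @` Q).
Proof.
move=> c1 F0 FG; apply: infI_glb => [_ [j /FG[i Pi FGij] <-]|].
  by have := infI_img_lb Pi F0; lra.
by have := infI_le1 (F @` P); lra.
Qed.

Lemma le_supI_img : (forall j, G j <= 1) ->
    (forall i, P i -> exists2 j, Q j & F i <= G j) ->
  supI (F @` P) <= supI (G @` Q).
Proof.
move=> G1 FG; have := @supI_img_transfer 1 (lexx _) G1.
by rewrite addrK; apply=> i /FG[j Qj FGij]; exists j; rewrite ?addrK.
Qed.

Lemma le_infI_img : (forall i, 0 <= F i) ->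
    (forall j, Q j -> exists2 i, P i & F i <= G j) ->
  infI (F @` P) <= infI (G @` Q).
Proof.
move=> F0 FG; have := @infI_img_transfer 1 (lexx _) F0.
by rewrite addrK; apply=> j /FG[i Pi FGij]; exists i; rewrite ?addrK.
Qed.

Lemma le_supI_min c : (forall i, F i <= 1) -> c <= supI (F @` P) ->
  c <= supI [set Num.min (F i) c | i in P].
Proof.
move=> F1 cF; set s := supI _; rewrite leNgt; apply/negP => sc.
have [_ [i Pi <-] sFi] := supI_gt (supI_ge0 _) (lt_le_trans sc cF).
have : Num.min (F i) c <= s by apply: supI_ub => [_ [j _ <-]|]; rewrite ?ge_min ?F1 //; exists i.
by rewrite leNgt lt_min sFi sc.
Qed.

End Images.

Lemma luk_and_ge0 a b : 0 <= luk_and a b.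
Proof. by rewrite /luk_and le_max lexx. Qed.

Lemma luk_and_ge a b : a + b - 1 <= luk_and a b.
Proof. by rewrite /luk_and le_max lexx orbT. Qed.

Lemma luk_and_le a b c : 0 <= c -> a + b - 1 <= c -> luk_and a b <= c.
Proof. by move=> c0 abc; rewrite /luk_and ge_max c0 abc. Qed.

Lemma luk_and_le1 a b : a <= 1 -> b <= 1 -> luk_and a b <= 1.
Proof. by move=> a1 b1; apply: luk_and_le => //; lra. Qed.

Lemma luk_and_le2 a b a' b' : a <= a' -> b <= b' -> luk_and a b <= luk_and a' b'.
Proof. by move=> aa' bb'; apply: luk_and_le (luk_and_ge0 _ _) _; have := luk_and_ge a' b'; lra. Qed.

Lemma luk_imp_le1 a b : luk_imp a b <= 1.
Proof. by rewrite /luk_imp ge_min lexx. Qed.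

Lemma luk_imp_le a b : luk_imp a b <= 1 - a + b.
Proof. by rewrite /luk_imp ge_min lexx orbT. Qed.

Lemma luk_imp_ge a b c : c <= 1 -> c <= 1 - a + b -> c <= luk_imp a b.
Proof. by move=> c1 cab; rewrite /luk_imp le_min c1 cab. Qed.

Lemma luk_imp_ge0 a b : a <= 1 -> 0 <= b -> 0 <= luk_imp a b.
Proof. by move=> a1 b0; apply: luk_imp_ge => //; lra. Qed.

Lemma luk_and_transfer a b a' b' c d : c <= 1 -> d <= 1 ->
  a + c - 1 <= a' -> b + d - 1 <= b' -> luk_and a b + c + d - 2 <= luk_and a' b'.
Proof.
move=> c1 d1 aa' bb'; have := luk_and_ge a' b'; have := luk_and_ge0 a' b'.
by rewrite /luk_and; case: (leP 0 (a + b - 1)) => _; lra.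
Qed.

Lemma luk_imp_transfer a b a' b' c d : c <= 1 -> d <= luk_imp a' b' ->
  a + c - 1 <= a' -> b' <= b -> d + c - 1 <= luk_imp a b.
Proof.
move=> c1 dab aa' b'b; have := luk_imp_le a' b'; have := luk_imp_le1 a' b'.
by move=> ? ?; apply: luk_imp_ge; lra.
Qed.

End TruthValues.

Section Degrees.
Variables (R : realType) (Z : Type).
Implicit Types (tau : set Z -> R) (A G : set Z) (Re : set Z -> R).

Lemma preopen_ge0 tau A : 0 <= preopen tau A.
Proof. by apply: infI_glb => // _ [x _ <-]; exact: supI_ge0. Qed.

Lemma preopen_le1 tau A : preopen tau A <= 1.
Proof. exact: infI_le1. Qed.

Lemma prenbhd_le1 tau x A : prenbhd tau x A <= 1.
Proof. by apply: supI_lub => // _ [B _ <-]; exact: preopen_le1. Qed.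

Lemma rel_preopen_ge0 tau G A : 0 <= rel_preopen tau G A.
Proof. exact: supI_ge0. Qed.

Lemma Kdeg_le1 Re G : Kdeg Re G <= 1.
Proof. exact: infI_le1. Qed.

Lemma incl_deg_le1 G Re (eta : set Z -> R) : incl_deg G Re eta <= 1.
Proof. exact: infI_le1. Qed.

Lemma FFdeg_le1 Re : FFdeg Re <= 1.
Proof.
have : 0 <= infI [set d | 0 <= d <= 1 /\ finite_set [set B | d < Re B]].
  by apply: infI_glb => // d [/andP[]].
by rewrite /FFdeg; lra.
Qed.

Lemma Gamma_le (eta : set Z -> R) G Re : ffamily G Re ->
  Gamma G eta <= luk_imp (luk_and (Kdeg Re G) (incl_deg G Re eta))
    (supI [set luk_and (Kdeg P G) (FFdeg P)
           | P in [set P | ffamily G P /\ (forall B, P B <= Re B)]]).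
Proof.
move=> ffRe; apply: infI_img_lb ffRe _ => Q; apply: luk_imp_ge0; last exact: supI_ge0.
by apply: luk_and_le1; [exact: Kdeg_le1 | exact: incl_deg_le1].
Qed.

Lemma Gamma_le1 G (eta : set Z -> R) : Gamma G eta <= 1.
Proof. exact: infI_le1. Qed.

End Degrees.

Section FamilyTransfer.
Variables (R : realType) (X Y : Type) (f : X -> Y) (B : set X).
Implicit Types (Re : set Y -> R) (P : set X -> R).

Local Notation trace E := (f @^-1` E `&` B).

Lemma image_trace (E : set Y) : E `<=` f @` B -> f @` trace E = E.
Proof.
move=> EfB; apply/seteqP; split=> [_ [x [fxE _] <-] //|y Ey].
by have [x Bx fxy] := EfB y Ey; exists x; rewrite // /preimage /= fxy.
Qed.

Definition ffamily_preimage Re (A : set X) : R :=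
  supI [set Re E | E in [set E | trace E = A]].

Definition ffamily_image Re P (E : set Y) : R := Num.min (Re E) (P (trace E)).

Lemma ffamily_preimageP Re : ffamily (f @` B) Re -> ffamily B (ffamily_preimage Re).
Proof.
move=> [Re01 _]; split=> [A|A AB].
  rewrite supI_ge0; apply: supI_lub => // _ [E _ <-].
  by case/andP: (Re01 E).
apply/le_anti; rewrite supI_ge0 andbT; apply: supI_lub => // e [E EA _].
by case: AB; rewrite -EA => x [].
Qed.

Lemma le_ffamily_preimage Re (E : set Y) :
  (forall E, Re E <= 1) -> Re E <= ffamily_preimage Re (trace E).
Proof. by move=> Re1; apply: supI_img_ub. Qed.

Lemma ffamily_imageP Re P : ffamily (f @` B) Re -> (forall A, 0 <= P A <= 1) ->
  ffamily (f @` B) (ffamily_image Re P).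
Proof.
move=> [Re01 Re0] P01; split=> [E|E EfB].
  rewrite /ffamily_image le_min ge_min.
  by case/andP: (Re01 E) => -> ->; case/andP: (P01 (trace E)) => ->.
by rewrite /ffamily_image Re0 // min_l //; case/andP: (P01 (trace E)).
Qed.

Lemma Kdeg_preimage Re : (forall E, Re E <= 1) ->
  Kdeg Re (f @` B) <= Kdeg (ffamily_preimage Re) B.
Proof.
move=> Re1; apply: le_infI_img => [y|x Bx]; first exact: supI_ge0.
exists (f x); first by exists x.
apply: le_supI_img => [A|E Efx]; first by apply: supI_lub => // _ [E _ <-].
by exists (trace E) => //; exact: le_ffamily_preimage.
Qed.

Lemma incl_deg_preimage Re (eta : set Y -> R) (eta' : set X -> R) c :
    ffamily (f @` B) Re -> (forall E, 0 <= eta E) -> (forall A, 0 <= eta' A) ->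
    c <= 1 -> (forall E, eta E + c - 1 <= eta' (trace E)) ->
  incl_deg (f @` B) Re eta + c - 1 <= incl_deg B (ffamily_preimage Re) eta'.
Proof.
move=> [Re01 Re0] eta0 eta'0 c1 eta_eta'.
set i := incl_deg _ _ _; have i1 : i <= 1 := incl_deg_le1 _ _ _.
apply: infI_glb => [_ [A AB <-]|]; last lra.
apply: luk_imp_ge; first lra.
have eta'A0 := eta'0 A.
suff : ffamily_preimage Re A <= eta' A + 2 - i - c by lra.
apply: supI_lub => [_ [E EA <-]|]; last lra.
have [EfB|nEfB] := pselect (E `<=` f @` B); last by rewrite Re0 //; lra.
have : i <= 1 - Re E + eta E.
  apply: le_trans _ (luk_imp_le _ _); apply: infI_lb; [move=> _ [E' _ <-] | by exists E].
  by apply: luk_imp_ge0; [case/andP: (Re01 E') | exact: eta0].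
by have := eta_eta' E; rewrite EA; lra.
Qed.

Lemma Kdeg_image Re P : (forall E, Re E <= 1) ->
    (forall A, P A <= ffamily_preimage Re A) ->
  Kdeg P B <= Kdeg (ffamily_image Re P) (f @` B).
Proof.
move=> Re1 P_Re; have push1 E : ffamily_image Re P E <= 1.
  by rewrite /ffamily_image ge_min Re1.
apply: le_infI_img => [x|_ [x Bx <-]]; first exact: supI_ge0.
exists x => //; apply: supI_lub => [_ [A Ax <-]|]; last exact: supI_ge0.
apply: le_trans (le_supI_min Re1 (P_Re A)) _.
apply: le_supI_img => // E EA; exists E; first by rewrite /= -EA in Ax; case: Ax.
by rewrite /ffamily_image EA.
Qed.

Lemma FFdeg_image Re P : ffamily (f @` B) Re -> FFdeg P <= FFdeg (ffamily_image Re P).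
Proof.
move=> [_ Re0]; rewrite /FFdeg lerD2l lerN2.
apply: infI_glb => [d [d01 finP]|]; last exact: infI_le1.
apply: infI_lb => [e [/andP[] //]|]; split=> //.
apply: sub_finite_set (finite_image (image^~ f) finP) => E /=.
rewrite lt_min => /andP[dRe dP]; exists (trace E) => //.
apply: image_trace; apply: contrapT => nEfB.
by move: dRe; rewrite Re0 // ltNge; case/andP: d01 => ->.
Qed.

Lemma Gamma_image (eta : set Y -> R) (eta' : set X -> R) c :
    (forall E, 0 <= eta E) -> (forall A, 0 <= eta' A) -> c <= 1 ->
    (forall E, eta E + c - 1 <= eta' (trace E)) ->
  Gamma B eta' + c - 1 <= Gamma (f @` B) eta.
Proof.
move=> eta0 eta'0 c1 eta_eta'.
apply: infI_glb => [_ [Re ffRe <-]|]; last by have := Gamma_le1 B eta'; lra.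
have [Re01 _] := ffRe; have Re1 E : Re E <= 1 by case/andP: (Re01 E).
have ffRe' := ffamily_preimageP ffRe.
apply: (luk_imp_transfer c1 (Gamma_le eta' ffRe')).
  have K_K' : Kdeg Re (f @` B) + 1 - 1 <= Kdeg (ffamily_preimage Re) B.
    by rewrite addrK; exact: Kdeg_preimage.
  have := luk_and_transfer (lexx 1) c1 K_K' (incl_deg_preimage ffRe eta0 eta'0 c1 eta_eta').
  lra.
apply: le_supI_img => [P|P' [ffP' P'_Re']].
  by apply: luk_and_le1; [exact: Kdeg_le1 | exact: FFdeg_le1].
have [P'01 _] := ffP'.
exists (ffamily_image Re P').
  by split; [exact: ffamily_imageP | move=> E; rewrite /ffamily_image ge_min lexx].
by apply: luk_and_le2; [exact: Kdeg_image | exact: FFdeg_image].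
Qed.

End FamilyTransfer.

Definition LPC_at (R : realType) (Z : Type) (tau : set Z -> R) (x : Z) : R :=
  supI [set luk_and (prenbhd tau x B) (Gamma B (rel_preopen tau B)) | B in [set: set Z]].

Section PreContinuousImages.
Variables (R : realType) (X Y : Type) (tau : set X -> R) (sigma : set Y -> R) (f : X -> Y).

Local Notation irr := (pre_irresolute tau sigma f).
Local Notation opn := (pre_open_map tau sigma f).

Lemma preopen_preimage (V : set Y) :
  preopen sigma V + irr - 1 <= preopen tau (f @^-1` V).
Proof.
have : irr <= luk_imp (preopen sigma V) (preopen tau (f @^-1` V)).
  apply: infI_lb => [_ [W _ <-]|]; last by exists V.
  by apply: luk_imp_ge0; [exact: preopen_le1 | exact: preopen_ge0].
by have := luk_imp_le (preopen sigma V) (preopen tau (f @^-1` V)); lra.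
Qed.

Lemma preopen_image (U : set X) :
  preopen tau U + opn - 1 <= preopen sigma (f @` U).
Proof.
have : opn <= luk_imp (preopen tau U) (preopen sigma (f @` U)).
  apply: infI_lb => [_ [W _ <-]|]; last by exists U.
  by apply: luk_imp_ge0; [exact: preopen_le1 | exact: preopen_ge0].
by have := luk_imp_le (preopen tau U) (preopen sigma (f @` U)); lra.
Qed.

Lemma prenbhd_image x (B : set X) :
  prenbhd tau x B + opn - 1 <= prenbhd sigma (f x) (f @` B).
Proof.
apply: supI_img_transfer => [|V|U [Ux UB]]; [exact: infI_le1 | exact: preopen_le1 |].
exists (f @` U); last exact: preopen_image.
by split; [exists x | exact: image_subset].
Qed.

Lemma rel_preopen_preimage (B : set X) (E : set Y) :
  rel_preopen sigma (f @` B) E + irr - 1 <= rel_preopen tau B (f @^-1` E `&` B).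
Proof.
apply: supI_img_transfer => [|U|V VE]; [exact: infI_le1 | exact: preopen_le1 |].
exists (f @^-1` V) => /=; last exact: preopen_preimage.
rewrite -VE; apply/seteqP; split=> x /= [fxV Bx]; last by case: fxV.
by split=> //; split=> //; exists x.
Qed.

Lemma LPC_at_image x : LPC_at tau x + (irr + opn - 1) - 1 <= LPC_at sigma (f x).
Proof.
have irr1 : irr <= 1 by exact: infI_le1.
have opn1 : opn <= 1 by exact: infI_le1.
apply: supI_img_transfer => [|D|B _]; first lra.
  by apply: luk_and_le1; [exact: prenbhd_le1 | exact: Gamma_le1].
exists (f @` B) => //.
have Gamma_fB := Gamma_image (rel_preopen_ge0 sigma _) (rel_preopen_ge0 tau B) irr1
  (rel_preopen_preimage B).
by have := luk_and_transfer opn1 irr1 (prenbhd_image x B) Gamma_fB; lra.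
Qed.

End PreContinuousImages.

Theorem theorem4p7 (R : realType) (X Y : Type)
    (tau : set X -> R) (sigma : set Y -> R) (f : X -> Y) :
  fuzzifying_topology tau -> fuzzifying_topology sigma ->
  (forall y : Y, exists x : X, f x = y) ->
  Num.max 0 (LPC tau + pre_irresolute tau sigma f + pre_open_map tau sigma f - 2)
    <= LPC sigma.
Proof.
move=> _ _ f_surj.
have irr1 : pre_irresolute tau sigma f <= 1 := infI_le1 _.
have opn1 : pre_open_map tau sigma f <= 1 := infI_le1 _.
have LPC_transfer : LPC tau + (pre_irresolute tau sigma f + pre_open_map tau sigma f - 1) - 1
    <= LPC sigma.
  apply: (infI_img_transfer (F := LPC_at tau) (G := LPC_at sigma)) => [|x|y _].
  - lra.
  - exact: supI_ge0.
  - by have [x <-] := f_surj y; exists x => //; exact: LPC_at_image.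
rewrite ge_max; apply/andP; split; first by apply: infI_glb => // _ [y _ <-]; exact: supI_ge0.
lra.
Qed.
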